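(* Let $R$ be a finite commutative chain ring with maximal ideal $\langle a\rangle$, $a$ of nilpotency index $t$, residue field $\mathbb F_q$ of characteristic $p$. Let $e_1,\dots,e_r$ be positive integers not divisible by $p$, $I=\langle X_1^{e_1}-1,\dots,X_r^{e_r}-1\rangle$, $A=R[X_1,\dots,X_r]/I$, and let $\tau$ be the ring automorphism of $A$ given by $\tau(f(X_1,\dots,X_r)+I)=f(X_1^{e_1-1},\dots,X_r^{e_r-1})+I$. Let $\mathcal K$ be an ideal of $A$ and $G_0,\dots,G_t\in R[X_1,\dots,X_r]$ polynomials such that $\bigcap_{i=0}^t\mathrm{Ann}_A\langle G_i+I\rangle=0$, $\mathrm{Ann}_A\langle G_i+I\rangle+\mathrm{Ann}_A\langle G_j+I\rangle=A$ for all $0\le i<j\le t$, and $\mathcal K=\langle G_1,aG_2,\dots,a^{t-1}G_t\rangle+I$. Then $$\mathcal K^\perp=\langle\tau(G_0),a\tau(G_t),\dots,a^{t-1}\tau(G_2)\rangle+I,$$ and the polynomials $\tau(G_0),\dots,\tau(G_t)$ also satisfy $\bigcap_{i}\mathrm{Ann}_A\langle\tau(G_i)+I\rangle=0$ and pairwise comaximality of the annihilators $\mathrm{Ann}_A\langle \tau(G_i)+I\rangle$.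
   Context: $\tau(G_i)$ denotes $G_i(X_1^{e_1-1},\dots,X_r^{e_r-1})$. $A$ is a free $R$-module with basis the monomials $X_1^{i_1}\cdots X_r^{i_r}$, $0\le i_k<e_k$; elements are identified with coefficient vectors in $R^n$, $n=e_1\cdots e_r$. For $\mathbf x,\mathbf y\in R^n$, $\mathbf x\cdot\mathbf y=\sum_k x_ky_k$, and for a code $\mathcal K$, $\mathcal K^\perp=\{\mathbf x:\mathbf x\cdot\mathbf c=0\ \forall\mathbf c\in\mathcal K\}$. *)

From HB Require Import structures.
From mathcomp Require Import all_boot all_order all_algebra.
From mathcomp Require Import mpoly.

Set Implicit Arguments.
Unset Strict Implicit.
Unset Printing Implicit Defensive.
Import GRing.Theory.
Local Open Scope ring_scope.

Section Defs.
Context (R : comRingType) (r : nat) (e : 'I_r -> nat).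
Implicit Types (f g G : {mpoly R[r]}).

Definition inI f : Prop :=
  exists h : 'I_r -> {mpoly R[r]}, f = \sum_(k < r) h k * ('X_k ^+ e k - 1).

(** Preimage in R[X] of the ideal <gs> + I of A (as a predicate on polys) *)
Definition genIdeal (gs : seq {mpoly R[r]}) f : Prop :=
  exists (c : 'I_(size gs) -> {mpoly R[r]}) (h : 'I_r -> {mpoly R[r]}),
    f = \sum_(j < size gs) c j * gs`_j + \sum_(k < r) h k * ('X_k ^+ e k - 1).

Definition annA G f : Prop := forall y, genIdeal [:: G] y -> inI (f * y).

Definition annComax G H : Prop :=
  exists u v, annA G u /\ annA H v /\ inI (u + v - 1).

Definition tau G : {mpoly R[r]} :=
  G \mPo [tuple 'X_i ^+ (e i).-1 | i < r].

(** reduction to the canonical representative: exponents taken mod e_k,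
    i.e. the element of A written in the monomial basis X^i, 0 <= i_k < e_k *)
Definition redI f : {mpoly R[r]} :=
  \sum_(m <- msupp f) f@_m *: 'X_[[multinom (m i %% e i)%N | i < r]].

Definition dotA f g : R :=
  \sum_(m <- msupp (redI f)) (redI f)@_m * (redI g)@_m.

Definition perpA (K : {mpoly R[r]} -> Prop) f : Prop :=
  forall c, K c -> dotA f c = 0.

End Defs.

Definition chain_ring_max (R : finComUnitRingType) (a : R) : Prop :=
  (forall x y : R, (exists z, y = x * z) \/ (exists z, x = y * z)) /\
  (forall x : R, x \isn't a GRing.unit <-> exists y, x = a * y).

(* In [A] the dot product is [x . y = eps (x tau(y))], where [eps] reads off the
   constant coefficient of the reduced representative, and it is nondegenerate;
   as [tau] is an involutive automorphism of [A], this gives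
   [K^perp = tau (Ann_A K)].  The hypotheses on the [G_i] yield [E_i] in [A] with
   [E_i G_j = 0] for [j <> i], [E_i G_i = G_i] and [sum_i E_i = 1], and, [A] being
   finite, [E_i] is a multiple of [G_i].  For [x] in [Ann_A K] and [i >= 1], the
   component [x E_i] is killed by [a^(i-1)], so in the chain ring [R] it is a
   multiple of [a^(t-i+1) G_i]; hence [Ann_A K = <G_0, a G_t, ..., a^(t-1) G_2>].
   The annihilator conditions transfer to the [tau(G_i)] along [tau]. *)

From HB Require Import structures.
From mathcomp Require Import all_boot all_order all_algebra.
From mathcomp Require Import mpoly ssrcomplements.
From mathcomp Require Import ring zify.

Set Implicit Arguments.
Unset Strict Implicit.
Unset Printing Implicit Defensive.
Import GRing.Theory.
Local Open Scope ring_scope.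

Section IdealI.
Variables (R : comNzRingType) (r : nat) (e : 'I_r -> nat).
Local Notation P := {mpoly R[r]}.
Implicit Types (f g u : P) (m : 'X_{1..r}).

Lemma inI0 : inI e (0 : P).
Proof. by exists (fun _ => 0); rewrite big1 // => k _; rewrite mul0r. Qed.

Lemma inID f g : inI e f -> inI e g -> inI e (f + g).
Proof.
move=> [h1 ->] [h2 ->]; exists (fun k => h1 k + h2 k).
by rewrite -big_split; apply: eq_bigr => k _; rewrite mulrDl.
Qed.

Lemma inIMl g f : inI e f -> inI e (g * f).
Proof.
move=> [h ->]; exists (fun k => g * h k).
by rewrite mulr_sumr; apply: eq_bigr => k _; rewrite mulrA.
Qed.

Lemma inIMr g f : inI e f -> inI e (f * g).
Proof. by rewrite mulrC; apply: inIMl. Qed.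

Lemma inIN f : inI e f -> inI e (- f).
Proof. by move=> /(inIMl (-1)); rewrite mulN1r. Qed.

Lemma inIB f g : inI e f -> inI e g -> inI e (f - g).
Proof. by move=> hf /inIN; apply: inID. Qed.

Lemma inIZ c f : inI e f -> inI e (c *: f).
Proof. by rewrite -mul_mpolyC; apply: inIMl. Qed.

Lemma inI_sum (I : Type) (s : seq I) (Q : pred I) (F : I -> P) :
  (forall i, Q i -> inI e (F i)) -> inI e (\sum_(i <- s | Q i) F i).
Proof. by move=> h; apply: (big_ind (inI e)) => //; [exact: inI0 | exact: inID]. Qed.

Lemma inI_Xe k : inI e ('X_k ^+ e k - 1 : P).
Proof.
exists (fun j => (j == k)%:R); rewrite (bigD1 k) //= eqxx mul1r big1 ?addr0 //.
by move=> j /negbTE ->; rewrite mul0r.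
Qed.

Lemma inI_prod_sub1 (I : Type) (s : seq I) (F : I -> P) :
  (forall i, inI e (F i - 1)) -> inI e (\prod_(i <- s) F i - 1).
Proof.
move=> h; apply: (big_ind (fun x => inI e (x - 1))) => [|x y hx hy|i _]; last exact: h.
  by rewrite subrr; exact: inI0.
have -> : x * y - 1 = x * (y - 1) + (x - 1) by ring.
by apply: inID => //; apply: inIMl.
Qed.

Lemma inI_exp_sub1 u n : inI e (u - 1) -> inI e (u ^+ n - 1).
Proof. by move=> hu; rewrite -(card_ord n) -prodr_const; apply: inI_prod_sub1. Qed.

Definition mnm_mod m : 'X_{1..r} := [multinom (m i %% e i)%N | i < r].

Lemma mnm_modK m : mnm_mod (mnm_mod m) = mnm_mod m.
Proof. by apply/mnmP => i; rewrite !mnmE modn_mod. Qed.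

Lemma inI_XB_mnm_mod m : inI e ('X_[m] - 'X_[mnm_mod m] : P).
Proof.
pose q := [multinom (m i %/ e i * e i)%N | i < r].
have {1}-> : m = (mnm_mod m + q)%MM.
  by apply/mnmP => i; rewrite mnmDE !mnmE addnC -divn_eq.
have -> : 'X_[mnm_mod m + q] - 'X_[mnm_mod m] = 'X_[mnm_mod m] * ('X_[q] - 1) :> P.
  by rewrite mpolyXD; ring.
apply: inIMl; rewrite mpolyXE_id; apply: inI_prod_sub1 => i.
by rewrite mnmE mulnC exprM; apply: inI_exp_sub1; apply: inI_Xe.
Qed.

Lemma inI_XB m m' : mnm_mod m = mnm_mod m' -> inI e ('X_[m] - 'X_[m'] : P).
Proof.
move=> eq_mod; have -> : 'X_[m] - 'X_[m'] =
  ('X_[m] - 'X_[mnm_mod m]) - ('X_[m'] - 'X_[mnm_mod m']) :> P by rewrite eq_mod; ring.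
by apply: inIB; apply: inI_XB_mnm_mod.
Qed.

Lemma redIwE k f : (msize f <= k)%N ->
  redI e f = \sum_(m : 'X_{1..r < k}) f@_m *: 'X_[mnm_mod m].
Proof.
move=> le_fk; pose I : subFinType _ := 'X_{1..r < k}.
rewrite /redI (big_mksub I) //=; last first.
- by move=> m /msize_mdeg_lt /leq_trans; apply.
- by rewrite msupp_uniq.
by rewrite big_rmcond //= => m /memN_msupp_eq0 ->; rewrite scale0r.
Qed.

Lemma redI_is_linear : linear (@redI R r e).
Proof.
move=> c f g; pose k := maxn (msize (c *: f + g)) (maxn (msize f) (msize g)).
rewrite !(redIwE (k := k)) /k; try lia.
rewrite scaler_sumr -big_split; apply: eq_bigr => m _.
by rewrite mcoeffD mcoeffZ scalerDl scalerA.
Qed.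

HB.instance Definition _ :=
  GRing.isLinear.Build R P P _ (@redI R r e) redI_is_linear.

Lemma redIX m : redI e 'X_[m] = 'X_[mnm_mod m] :> P.
Proof. by rewrite /redI msuppX big_seq1 mcoeffX eqxx scale1r. Qed.

Lemma inI_subredI f : inI e (f - redI e f).
Proof.
rewrite {1}[f]mpolyE /redI -sumrB; apply: inI_sum => m _.
by rewrite -scalerBr; apply: inIZ; apply: inI_XB; rewrite mnm_modK.
Qed.

Lemma redI_mulXe g k : redI e (g * 'X_k ^+ e k) = redI e g.
Proof.
rewrite {1}[g]mpolyE mulr_suml linear_sum [RHS]/redI; apply: eq_bigr => m _.
rewrite -scalerAl linearZ /= mpolyXn -mpolyXD redIX.
congr (_ *: 'X_[_]); apply/mnmP => i; rewrite !mnmE mulmnE mnm1E.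
by case: (k =P i) => [->|_]; rewrite ?mul1n ?mul0n ?addn0 ?modnDr.
Qed.

Lemma redI_eq0 f : redI e f = 0 <-> inI e f.
Proof.
split=> [f0|[h ->]]; first by have := inI_subredI f; rewrite f0 subr0.
rewrite linear_sum big1 // => k _.
by rewrite mulrBr mulr1 linearB /= redI_mulXe subrr.
Qed.

Lemma msupp_redI f m : m \in msupp (redI e f) -> mnm_mod m = m.
Proof.
move=> /msupp_sum_le; rewrite filter_predT => /flatten_mapP [m' _].
by move=> /msuppZ_le; rewrite msuppX mem_seq1 => /eqP ->; rewrite mnm_modK.
Qed.

End IdealI.

Section Tau.
Variables (R : comNzRingType) (r : nat) (e : 'I_r -> nat).
Local Notation P := {mpoly R[r]}.
Implicit Types (f g : P) (m : 'X_{1..r}).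

HB.instance Definition _ :=
  GRing.LRMorphism.copy (@tau R r e) (comp_mpoly [tuple 'X_i ^+ (e i).-1 | i < r]).

Definition mnm_tau m : 'X_{1..r} := [multinom ((e i).-1 * m i)%N | i < r].

Lemma tauX m : tau e 'X_[m] = 'X_[mnm_tau m] :> P.
Proof.
rewrite /tau comp_mpolyX [RHS]mpolyXE_id; apply: eq_bigr => i _.
by rewrite tnth_map tnth_ord_tuple mnmE exprM.
Qed.

Lemma inI_tau f : inI e f -> inI e (tau e f).
Proof.
move=> [h ->]; rewrite rmorph_sum; apply: inI_sum => k _; rewrite rmorphM /=.
apply: inIMl; rewrite rmorphB rmorph1 /= mpolyXn tauX -mpolyX0; apply: inI_XB.
apply/mnmP => i; rewrite !mnmE mulmnE mnm1E mod0n.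
by case: (k =P i) => [->|_]; rewrite ?mul1n ?mul0n ?muln0 ?modnMl ?mod0n.
Qed.

Hypothesis e_gt0 : forall k, (0 < e k)%N.

Lemma mnm_tauK m : mnm_mod e (mnm_tau (mnm_tau m)) = mnm_mod e m.
Proof.
apply/mnmP => i; rewrite !mnmE; have := e_gt0 i.
case: (e i) => // k _ /=; rewrite mulnA -modnMml.
have -> : (k * k %% k.+1 = 1 %% k.+1)%N.
  by rewrite -(modnDr (k * k)) (_ : k * k + k.+1 = k * k.+1 + 1)%N ?modnMDl //; lia.
by rewrite modnMml mul1n.
Qed.

Lemma inI_tauK f : inI e (tau e (tau e f) - f).
Proof.
elim/mpolyind: f => [|c m f _ _ IH]; first by rewrite !rmorph0 subr0; exact: inI0.
have -> : tau e (tau e (c *: 'X_[m] + f)) - (c *: 'X_[m] + f) =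
    c *: (tau e (tau e 'X_[m]) - 'X_[m]) + (tau e (tau e f) - f).
  by rewrite !raddfD /= !linearZ /=; ring.
by apply: inID => //; apply: inIZ; rewrite !tauX; apply: inI_XB; rewrite mnm_tauK.
Qed.

Lemma inI_tauE f : inI e (tau e f) <-> inI e f.
Proof.
split=> [/inI_tau tauf|]; last exact: inI_tau.
by rewrite -[f](subKr (tau e (tau e f))); apply: inIB => //; apply: inI_tauK.
Qed.

Lemma inI_tau_mul f g : inI e (f * tau e g) <-> inI e (tau e f * g).
Proof.
split=> [/inI_tau|hfg].
  rewrite rmorphM /= => h.
  have -> : tau e f * g =
      tau e f * tau e (tau e g) - tau e f * (tau e (tau e g) - g) by ring.
  by apply: inIB => //; apply: inIMl; apply: inI_tauK.
have := inI_tau hfg; rewrite rmorphM /= => h.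
have -> : f * tau e g =
    tau e (tau e f) * tau e g - (tau e (tau e f) - f) * tau e g by ring.
by apply: inIB => //; apply: inIMr; apply: inI_tauK.
Qed.

Lemma mnm_mod_tau_eq0 m1 m2 :
  (mnm_mod e (m1 + mnm_tau m2)%MM == 0%MM) = (mnm_mod e m1 == mnm_mod e m2).
Proof.
apply/eqP/eqP => h; apply/mnmP => i; have := congr1 (fun m : 'X_{1..r} => m i) h;
  rewrite /= !mnmE; have := e_gt0 i; case: (e i) => // k _ /= {}h.
- by apply/eqP; rewrite -(eqn_modDr (k * m2 i)) -mulSn modnMr h.
- by rewrite -modnDml h modnDml -mulSn modnMr.
Qed.

End Tau.

Section IdealSpan.
Variables (R : comNzRingType) (r : nat) (e : 'I_r -> nat).
Local Notation P := {mpoly R[r]}.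
Implicit Types (gs hs : seq P) (f g x y G : P).

Lemma genIdealP gs f : genIdeal e gs f <->
  exists c : 'I_(size gs) -> P, inI e (f - \sum_(j < size gs) c j * gs`_j).
Proof.
split=> [[c [h ->]]|[c [h hf]]]; exists c; first by rewrite addrC addKr; exists h.
by exists h; rewrite -hf addrC subrK.
Qed.

Lemma genIdeal_congr gs f g : inI e (f - g) -> genIdeal e gs g -> genIdeal e gs f.
Proof.
move=> hfg /genIdealP [c hc]; apply/genIdealP; exists c.
by rewrite -(subrK g f) -addrA; apply: inID.
Qed.

Lemma genIdeal0 gs : genIdeal e gs 0.
Proof.
apply/genIdealP; exists (fun _ => 0); rewrite big1 ?subrr; first exact: inI0.
by move=> j _; rewrite mul0r.
Qed.

Lemma genIdealD gs f g : genIdeal e gs f -> genIdeal e gs g -> genIdeal e gs (f + g).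
Proof.
move=> /genIdealP [c1 h1] /genIdealP [c2 h2]; apply/genIdealP.
exists (fun j => c1 j + c2 j); under eq_bigr do rewrite mulrDl.
by rewrite big_split /= opprD addrACA; apply: inID.
Qed.

Lemma genIdealMl gs h f : genIdeal e gs f -> genIdeal e gs (h * f).
Proof.
move=> /genIdealP [c hc]; apply/genIdealP; exists (fun j => h * c j).
by under eq_bigr do rewrite -mulrA; rewrite -mulr_sumr -mulrBr; apply: inIMl.
Qed.

Lemma genIdeal_sum gs (I : Type) (s : seq I) (Q : pred I) (F : I -> P) :
  (forall i, Q i -> genIdeal e gs (F i)) -> genIdeal e gs (\sum_(i <- s | Q i) F i).
Proof.
by move=> h; apply: (big_ind (genIdeal e gs)); [exact: genIdeal0 | exact: genIdealD |].
Qed.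

Lemma genIdeal_nth gs j : (j < size gs)%N -> genIdeal e gs gs`_j.
Proof.
move=> lt_j; apply/genIdealP; exists (fun i => (i == Ordinal lt_j)%:R).
rewrite (bigD1 (Ordinal lt_j)) //= eqxx mul1r big1 ?addr0 ?subrr; first exact: inI0.
by move=> i /negbTE ->; rewrite mul0r.
Qed.

Lemma inI_mul_genIdeal gs hs x y : genIdeal e gs x -> genIdeal e hs y ->
  (forall j i, (j < size gs)%N -> (i < size hs)%N -> inI e (gs`_j * hs`_i)) ->
  inI e (x * y).
Proof.
move=> /genIdealP [c hc] /genIdealP [d hd] gs_hs.
set sx := \sum_(j < _) _ in hc; set sy := \sum_(j < _) _ in hd.
have -> : x * y = (x - sx) * y + sx * (y - sy) + sx * sy by ring.
apply: inID; first by apply: inID; [apply: inIMr | apply: inIMl].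
rewrite mulr_suml; apply: inI_sum => j _; rewrite mulr_sumr; apply: inI_sum => i _.
rewrite mulrACA; apply: inIMl; exact: gs_hs.
Qed.

Lemma genIdeal_tau gs hs x : genIdeal e gs x ->
  (forall j, (j < size gs)%N -> genIdeal e hs (tau e gs`_j)) -> genIdeal e hs (tau e x).
Proof.
move=> /genIdealP [c hc] tau_gs.
apply: (genIdeal_congr (g := \sum_(j < size gs) tau e (c j) * tau e gs`_j)).
  by under eq_bigr do rewrite -rmorphM; rewrite -rmorph_sum -rmorphB; apply: inI_tau.
by apply: genIdeal_sum => j _; apply: genIdealMl; apply: tau_gs.
Qed.

Lemma annAP G f : annA e G f <-> inI e (f * G).
Proof.
split=> [|fG y /genIdealP [c]].
  by apply; apply: (genIdeal_nth (gs := [:: G]) (j := 0)).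
rewrite big_ord1 /= => hy.
have -> : f * y = f * (y - c ord0 * G) + c ord0 * (f * G) by ring.
by apply: inID; apply: inIMl.
Qed.

Lemma annComax_tau G H : annComax e G H -> annComax e (tau e G) (tau e H).
Proof.
move=> [u [v [/annAP uG [/annAP vH uv1]]]].
exists (tau e u), (tau e v); split; [|split].
- by apply/annAP; rewrite -rmorphM; apply: inI_tau.
- by apply/annAP; rewrite -rmorphM; apply: inI_tau.
- by rewrite -(rmorph1 (tau e)) -rmorphD -rmorphB; apply: inI_tau.
Qed.

Hypothesis e_gt0 : forall k, (0 < e k)%N.

Lemma annA_tau G f : annA e (tau e G) f <-> annA e G (tau e f).
Proof. by rewrite !annAP (inI_tau_mul e_gt0). Qed.

End IdealSpan.

Section DotProduct.
Variables (R : comNzRingType) (r : nat) (e : 'I_r -> nat).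
Hypothesis e_gt0 : forall k, (0 < e k)%N.
Local Notation P := {mpoly R[r]}.
Local Notation deg_bound := (\sum_i e i).+1.
Implicit Types (f g c y : P) (m : 'X_{1..r}).

Lemma mdeg_mnm_mod m : (mdeg (mnm_mod e m) < deg_bound)%N.
Proof.
rewrite ltnS mdegE; apply: leq_sum => i _; rewrite mnmE.
by apply: ltnW; rewrite ltn_mod.
Qed.

Lemma dotAE f g :
  dotA e f g = \sum_(m : 'X_{1..r < deg_bound}) (redI e f)@_m * (redI e g)@_m.
Proof.
pose I : subFinType _ := 'X_{1..r < deg_bound}.
rewrite /dotA (big_mksub I) //=; last first.
- by move=> m /msupp_redI <-; apply: mdeg_mnm_mod.
- by rewrite msupp_uniq.
by rewrite big_rmcond //= => m /memN_msupp_eq0 ->; rewrite mul0r.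
Qed.

Lemma dotAC f g : dotA e f g = dotA e g f.
Proof. by rewrite !dotAE; apply: eq_bigr => m _; rewrite mulrC. Qed.

Lemma dotADl f g c : dotA e (f + g) c = dotA e f c + dotA e g c.
Proof.
by rewrite !dotAE -big_split; apply: eq_bigr => m _; rewrite raddfD mcoeffD mulrDl.
Qed.

Lemma dotAZl a f c : dotA e (a *: f) c = a * dotA e f c.
Proof.
by rewrite !dotAE mulr_sumr; apply: eq_bigr => m _; rewrite linearZ mcoeffZ mulrA.
Qed.

Lemma dotADr f g c : dotA e c (f + g) = dotA e c f + dotA e c g.
Proof. by rewrite !(dotAC c) dotADl. Qed.

Lemma dotAZr a f c : dotA e c (a *: f) = a * dotA e c f.
Proof. by rewrite !(dotAC c) dotAZl. Qed.

Lemma dotA0l c : dotA e 0 c = 0.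
Proof. by rewrite -(scale0r (0 : P)) dotAZl mul0r. Qed.

Lemma dotAX y m : dotA e y 'X_[m] = (redI e y)@_(mnm_mod e m).
Proof.
rewrite dotAE (bigD1 (Sub (mnm_mod e m) (mdeg_mnm_mod m))) // redIX /= mcoeffX eqxx mulr1.
rewrite big1 ?addr0 // => m' /eqP neq_m'; rewrite mcoeffX.
by case: eqP => [eq_m'|]; [case: neq_m'; apply: val_inj | rewrite mulr0].
Qed.

Lemma dotA_nondeg y : (forall m, dotA e y 'X_[m] = 0) -> inI e y.
Proof.
move=> y_perp; apply/redI_eq0/mpolyP => m; rewrite mcoeff0.
case: (boolP (m \in msupp (redI e y))) => [/msupp_redI {1}<-|/memN_msupp_eq0 //].
by rewrite -dotAX y_perp.
Qed.

Lemma dotA_tau f c : dotA e f c = (redI e (f * tau e c))@_0.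
Proof.
elim/mpolyind: f => [|a m1 f _ _ IHf].
  by rewrite dotA0l mul0r linear0 mcoeff0.
rewrite dotADl dotAZl IHf mulrDl -scalerAl raddfD /= linearZ /= mcoeffD mcoeffZ.
congr (a * _ + _); clear IHf; elim/mpolyind: c => [|b m2 c _ _ IHc].
  by rewrite dotAC dotA0l rmorph0 mulr0 linear0 mcoeff0.
rewrite dotADr dotAZr IHc raddfD /= linearZ /= mulrDr -scalerAr.
rewrite raddfD /= linearZ /= mcoeffD mcoeffZ; congr (b * _ + _).
rewrite dotAC dotAX redIX mcoeffX tauX -mpolyXD redIX mcoeffX.
by rewrite (mnm_mod_tau_eq0 e_gt0) eq_sym.
Qed.

Lemma dotA_inI f c : inI e (f * tau e c) -> dotA e f c = 0.
Proof. by move=> /redI_eq0 fc; rewrite dotA_tau fc mcoeff0. Qed.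

Lemma dotA_tauM f g c : dotA e (tau e f * g) c = dotA e (g * tau e c) f.
Proof. by rewrite !dotA_tau; congr (redI e _)@_0; ring. Qed.

End DotProduct.

Section FiniteQuotient.
Variables (R : finComNzRingType) (r : nat) (e : 'I_r -> nat).
Hypothesis e_gt0 : forall k, (0 < e k)%N.
Local Notation P := {mpoly R[r]}.

(* Pigeonhole: [redI] takes values in the finite set of coefficient vectors on
   the monomials of degree at most [\sum_i e i]. *)
Lemma inI_exp_periodic (g : P) : exists n1 n2, (n1 < n2)%N /\ inI e (g ^+ n2 - g ^+ n1).
Proof.
pose B := 'X_{1..r < (\sum_i e i).+1}.
pose coefs n := [ffun m : B => (redI e (g ^+ n))@_(val m)].
have /injectivePn [n1 [n2 neq_n12 eq_coefs]] :
    ~~ injectiveb (fun n : 'I_#|{: {ffun B -> R}}|.+1 => coefs n).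
  by apply/negP => /injectiveP /leq_card; rewrite card_ord ltnn.
have eq_red : redI e (g ^+ n1) = redI e (g ^+ n2).
  apply/mpolyP => m; case: (boolP (mdeg m < (\sum_i e i).+1)%N) => [lt_m|ge_m].
    by have := congr1 (fun c : {ffun B -> R} => c (Sub m lt_m)) eq_coefs; rewrite !ffunE.
  rewrite !memN_msupp_eq0 //; apply/negP => /msupp_redI mod_m;
    by move: ge_m; rewrite -mod_m (mdeg_mnm_mod e_gt0).
have eq_pow : inI e (g ^+ n2 - g ^+ n1).
  by apply/redI_eq0; rewrite linearB /= eq_red subrr.
case: (ltngtP n1 n2) => [lt_n12|lt_n21|/val_inj eq_n12].
- by exists n1, n2.
- by exists n2, n1; split=> //; rewrite -opprB; apply: inIN.
- by rewrite eq_n12 eqxx in neq_n12.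
Qed.

End FiniteQuotient.

Section Idempotents.
Variables (R : comNzRingType) (r : nat) (e : 'I_r -> nat).
Local Notation P := {mpoly R[r]}.
Variables (n : nat) (G : 'I_n -> P).
Hypothesis G_meet0 : forall f, (forall i, annA e (G i) f) -> inI e f.
Hypothesis G_comax : forall i j : 'I_n, (i < j)%N -> annComax e (G i) (G j).

Lemma inI_meet0 f : (forall i, inI e (f * G i)) -> inI e f.
Proof. by move=> fG; apply: G_meet0 => i; apply/annAP. Qed.

Lemma annComax_sep i j : i != j -> exists w, inI e (w * G j) /\ inI e ((1 - w) * G i).
Proof.
wlog lt_ij : i j / (i < j)%N.
  move=> sep_lt; case: (ltngtP i j) => [|lt_ji|/val_inj ->]; [exact: sep_lt| |].
    have [w [wi wj]] := sep_lt j i lt_ji (negbT (ltn_eqF lt_ji)); exists (1 - w).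
    by rewrite subKr.
  by rewrite eqxx.
move=> _; have [u [v [/annAP uG [/annAP vG uv1]]]] := G_comax lt_ij.
exists v; split=> //; have -> : (1 - v) * G i = u * G i - (u + v - 1) * G i by ring.
by apply: inIB => //; apply: inIMr.
Qed.

Lemma inI_mulG i j : i != j -> inI e (G i * G j).
Proof.
move=> /annComax_sep [w [wj wi]].
have -> : G i * G j = G i * (w * G j) + G j * ((1 - w) * G i) by ring.
by apply: inID; apply: inIMl.
Qed.

Definition separates i (Ei : P) :=
  (forall j, j != i -> inI e (Ei * G j)) /\ inI e ((1 - Ei) * G i).

Lemma exists_separating : exists E, forall i, separates i (E i).
Proof.
apply: fin_all_exists => i.
suff [E [EG E1]] : exists E, (forall j, j \in enum 'I_n -> j != i -> inI e (E * G j))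
    /\ inI e ((1 - E) * G i).
  by exists E; split=> // j; apply: EG; rewrite mem_enum.
elim: (enum 'I_n) => [|j s [E [EG E1]]].
  by exists 1; split=> //; rewrite subrr mul0r; exact: inI0.
case: (eqVneq j i) => [->|neq_ji].
  by exists E; split=> // k; rewrite in_cons => /predU1P [->|]; [rewrite eqxx|apply: EG].
have [w [wj wi]] : exists w, inI e (w * G j) /\ inI e ((1 - w) * G i).
  by apply: annComax_sep; rewrite eq_sym.
exists (E * w); split=> [k|].
  rewrite in_cons => /predU1P [-> _|k_s neq_ki]; first by rewrite -mulrA; apply: inIMl.
  by rewrite mulrAC; apply: inIMr; apply: EG.
have -> : (1 - E * w) * G i = (1 - E) * G i + E * ((1 - w) * G i) by ring.
by apply: inID => //; apply: inIMl.
Qed.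

Variable E : 'I_n -> P.
Hypothesis E_sep : forall i, separates i (E i).

Lemma inI_sumE_sub1 : inI e (\sum_i E i - 1).
Proof.
apply: inI_meet0 => k; rewrite (bigD1 k) //=.
have -> : (E k + \sum_(i | i != k) E i - 1) * G k =
    - ((1 - E k) * G k) + \sum_(i | i != k) E i * G k by rewrite -mulr_suml; ring.
apply: inID; first by apply: inIN; case: (E_sep k).
by apply: inI_sum => i neq_ik; case: (E_sep i) => EG _; apply: EG; rewrite eq_sym.
Qed.

Lemma inI_mulE i j : i != j -> inI e (E i * E j).
Proof.
move=> neq_ij; apply: inI_meet0 => k; case: (eqVneq k i) => [->|neq_ki].
  by rewrite -mulrA; apply: inIMl; case: (E_sep j) => EG _; apply: EG.
by rewrite mulrAC; apply: inIMr; case: (E_sep i) => EG _; apply: EG.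
Qed.

Lemma inI_E_idem i : inI e (E i - E i * E i).
Proof.
have := inI_sumE_sub1; rewrite (bigD1 i) //= => sumE.
have -> : E i - E i * E i =
    - (E i * (E i + \sum_(j | j != i) E j - 1)) + \sum_(j | j != i) E i * E j.
  by rewrite -mulr_sumr; ring.
apply: inID; first by apply: inIN; apply: inIMl.
by apply: inI_sum => j neq_ji; apply: inI_mulE; rewrite eq_sym.
Qed.

Lemma inI_cancel_expG i z k :
  (forall j, j != i -> inI e (z * G j)) -> inI e (z * G i ^+ k) -> inI e z.
Proof.
move=> zG; elim: k => [|k IHk]; first by rewrite expr0 mulr1.
move=> zGk; apply: IHk; apply: inI_meet0 => j; case: (eqVneq j i) => [->|neq_ji].
  by rewrite -mulrA -exprSr.
by rewrite mulrAC; apply: inIMr; apply: zG.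
Qed.

(* If [G_i^n2 = G_i^n1] in [A] then [E_i = E_i G_i^(n2-n1)]. *)
Lemma E_multiple_G i : (exists n1 n2, (n1 < n2)%N /\ inI e (G i ^+ n2 - G i ^+ n1)) ->
  exists g, inI e (E i - g * G i).
Proof.
move=> [n1 [n2 [lt_n12 periodic]]]; set d := (n2 - n1)%N.
have d_gt0 : (0 < d)%N by rewrite subn_gt0.
exists (E i * G i ^+ d.-1); rewrite -mulrA -exprSr prednK //.
apply: (@inI_cancel_expG i _ n1) => [j neq_ji|].
  have -> : (E i - E i * G i ^+ d) * G j = (1 - G i ^+ d) * (E i * G j) by ring.
  by apply: inIMl; case: (E_sep i) => EG _; apply: EG.
have -> : (E i - E i * G i ^+ d) * G i ^+ n1 = - (E i * (G i ^+ n2 - G i ^+ n1)).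
  by rewrite -(subnK (ltnW lt_n12)) exprD -/d; ring.
by apply: inIN; apply: inIMl.
Qed.

End Idempotents.

Section ChainRing.
Variables (R : comUnitRingType) (a : R) (t : nat).
Hypothesis nonunit_dvd_a : forall x : R, x \isn't a GRing.unit -> exists y, x = a * y.
Hypothesis a_nilp : a ^+ t = 0.
Hypothesis apredt_neq0 : a ^+ t.-1 != 0.

Lemma apow_dvd_or_unit n c : (exists y, c = a ^+ n * y) \/
  (exists m u, [/\ (m < n)%N, u \is a GRing.unit & c = a ^+ m * u]).
Proof.
elim: n => [|n [[y ->]|[m [u [lt_mn u_unit ->]]]]].
- by left; exists c; rewrite expr0 mul1r.
- have [y_unit|/nonunit_dvd_a [y' ->]] := boolP (y \is a GRing.unit).
    by right; exists n, y.
  by left; exists y'; rewrite mulrA -exprSr.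
- by right; exists m, u; split=> //; apply: ltnW.
Qed.

Lemma apow_ann c k : (k <= t)%N -> c * a ^+ k = 0 -> exists c', c = a ^+ (t - k) * c'.
Proof.
move=> le_kt cak0; have [[y ->]|[m [u [lt_mt u_unit c_mu]]]] := apow_dvd_or_unit t c.
  by exists 0; rewrite a_nilp mul0r mulr0.
have amk0 : a ^+ (m + k) = 0.
  apply: (mulIr u_unit); rewrite mul0r -cak0 c_mu exprD; ring.
have le_t_mk : (t <= m + k)%N.
  rewrite leqNgt; apply: contra apredt_neq0 => lt_mk_t.
  have -> : t.-1 = (m + k + (t.-1 - (m + k)))%N by lia.
  by rewrite exprD amk0 mul0r.
by exists (a ^+ (m + k - t) * u); rewrite c_mu mulrA -exprD; congr (a ^+ _ * _); lia.
Qed.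

Variables (r : nat) (e : 'I_r -> nat).

Lemma inI_apowZ (x : {mpoly R[r]}) k : (k <= t)%N -> inI e (a ^+ k *: x) ->
  exists x', inI e (x - a ^+ (t - k) *: x').
Proof.
move=> le_kt /redI_eq0; rewrite linearZ /= => ak_red.
suff [x' red_x] : exists x', redI e x = a ^+ (t - k) *: x'.
  by exists x'; rewrite -red_x; apply: inI_subredI.
rewrite [redI e x]mpolyE; apply: (big_ind (fun p => exists x', p = a ^+ (t - k) *: x')).
- by exists 0; rewrite scaler0.
- by move=> _ _ [x1 ->] [x2 ->]; exists (x1 + x2); rewrite scalerDr.
move=> m _; have /(apow_ann le_kt) [c ->] : (redI e x)@_m * a ^+ k = 0.
  by rewrite mulrC -mcoeffZ ak_red mcoeff0.
by exists (c *: 'X_[m]); rewrite scalerA.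
Qed.

End ChainRing.

Section Dual.
Variables (R : finComUnitRingType) (a : R) (t r : nat) (e : 'I_r -> nat).
Hypothesis e_gt0 : forall k, (0 < e k)%N.
Hypothesis nonunit_dvd_a : forall x : R, x \isn't a GRing.unit -> exists y, x = a * y.
Hypothesis t_gt0 : (0 < t)%N.
Hypothesis a_nilp : a ^+ t = 0.
Hypothesis apredt_neq0 : a ^+ t.-1 != 0.
Local Notation P := {mpoly R[r]}.
Variable G : 'I_t.+1 -> P.
Hypothesis G_meet0 : forall f, (forall i, annA e (G i) f) -> inI e f.
Hypothesis G_comax : forall i j : 'I_t.+1, (i < j)%N -> annComax e (G i) (G j).

Definition gensK := [seq a ^+ i.-1 *: G (inord i) | i <- iota 1 t].

Definition gensAnn :=
  G ord0 :: [seq a ^+ i *: G (inord (t + 1 - i)) | i <- iota 1 t.-1].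

Lemma size_gensK : size gensK = t.
Proof. by rewrite size_map size_iota. Qed.

Lemma size_gensAnn : size gensAnn = t.
Proof. by rewrite /= size_map size_iota prednK. Qed.

Lemma nth_gensK s : (s < t)%N -> gensK`_s = a ^+ s *: G (inord s.+1).
Proof. by move=> lt_st; rewrite (nth_map 0) ?size_iota // nth_iota. Qed.

Lemma nth_gensAnn s : (s < t.-1)%N -> gensAnn`_s.+1 = a ^+ s.+1 *: G (inord (t - s)).
Proof.
move=> lt_s; rewrite /= (nth_map 0) ?size_iota // nth_iota // add1n.
by congr (_ *: G (inord _)); lia.
Qed.

Lemma inord_neq i j : (i <= t)%N -> (j <= t)%N -> i != j -> inord i != inord j :> 'I_t.+1.
Proof. by move=> le_it le_jt; apply: contra_neq => /(congr1 val); rewrite /= !inordK. Qed.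

Lemma inI_gensAnn_gensK j s : (j < t)%N -> (s < t)%N -> inI e (gensAnn`_j * gensK`_s).
Proof.
move=> lt_jt lt_st; rewrite nth_gensK //; case: j lt_jt => [|j] lt_jt.
  have -> : gensAnn`_0 = G (inord 0) by congr G; apply: val_inj; rewrite /= inordK.
  by rewrite -scalerAr; apply: inIZ; apply: inI_mulG G_comax _ _ _; apply: inord_neq.
rewrite nth_gensAnn; last by lia.
rewrite -scalerAl -scalerAr scalerA -exprD.
have [jst|neq_jst] := eqVneq (j.+1 + s)%N t.
  by rewrite jst a_nilp scale0r; exact: inI0.
by apply: inIZ; apply: (inI_mulG G_comax); apply: inord_neq; lia.
Qed.

Lemma genIdeal_gensAnn_aG s : (s < t)%N ->
  genIdeal e gensAnn (a ^+ (t - s) *: G (inord s.+1)).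
Proof.
case: s => [_|s lt_st]; first by rewrite subn0 a_nilp scale0r; apply: genIdeal0.
have -> : a ^+ (t - s.+1) *: G (inord s.+2) = gensAnn`_(t - s.+2).+1.
  by rewrite nth_gensAnn; [congr (a ^+ _ *: G (inord _)) | ]; lia.
by apply: genIdeal_nth; rewrite size_gensAnn; lia.
Qed.

Section Component.
Variable E : 'I_t.+1 -> P.
Hypothesis E_sep : forall i, separates e G i (E i).

(* Write [y = x E_i]; then [a^(i-1) y = 0] in [A], so the chain ring gives
   [y = a^(t-i+1) y'], and [y = y E_i = a^(t-i+1) y' g G_i]. *)
Lemma genIdeal_gensAnn_mulE x i : (forall s, (s < t)%N -> inI e (x * gensK`_s)) ->
  genIdeal e gensAnn (x * E i).
Proof.
move=> x_ann; have [g Eg] := E_multiple_G G_meet0 E_sep (inI_exp_periodic e_gt0 (G i)).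
case: i Eg => [[|s] lt_i] Eg; set i := Ordinal lt_i.
  apply: (genIdeal_congr (g := x * g * gensAnn`_0)).
    by rewrite -mulrA -mulrBr; apply: inIMl; rewrite /= (_ : ord0 = i) //; apply: val_inj.
  by apply: genIdealMl; apply: genIdeal_nth; rewrite size_gensAnn.
have lt_st : (s < t)%N by [].
have Gi : G (inord s.+1) = G i by congr G; apply: val_inj; rewrite /= inordK.
set y := x * E i; have ay : inI e (a ^+ s *: y).
  have -> : a ^+ s *: y = g * (x * (a ^+ s *: G i)) + a ^+ s *: (x * (E i - g * G i)).
    by rewrite /y -!mul_mpolyC; ring.
  apply: inID; last by apply/inIZ/inIMl.
  by apply: inIMl; rewrite -Gi -nth_gensK //; apply: x_ann.
have [y' yy'] := inI_apowZ nonunit_dvd_a a_nilp apredt_neq0 (ltnW lt_st) ay.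
apply: (genIdeal_congr (g := y' * g * (a ^+ (t - s) *: G i))).
  have -> : y - y' * g * (a ^+ (t - s) *: G i) = x * (E i - E i * E i)
      + (y - a ^+ (t - s) *: y') * E i + a ^+ (t - s) *: y' * (E i - g * G i).
    by rewrite /y -!mul_mpolyC; ring.
  apply: inID; last exact: inIMl.
  by apply: inID; [apply/inIMl/(inI_E_idem G_meet0 E_sep) | apply: inIMr].
by apply: genIdealMl; rewrite -Gi; apply: genIdeal_gensAnn_aG.
Qed.

End Component.

Lemma ann_gensK x : (forall s, (s < t)%N -> inI e (x * gensK`_s)) -> genIdeal e gensAnn x.
Proof.
move=> x_ann; have [E E_sep] := exists_separating G_comax.
apply: (genIdeal_congr (g := \sum_i x * E i)).
  have -> : x - \sum_i x * E i = - (x * (\sum_i E i - 1)) by rewrite -mulr_sumr; ring.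
  by apply/inIN/inIMl; exact: (inI_sumE_sub1 G_meet0 E_sep).
by apply: genIdeal_sum => i _; apply: genIdeal_gensAnn_mulE.
Qed.

Lemma perpA_gensK (K : P -> Prop) : (forall f, K f <-> genIdeal e gensK f) ->
  forall f, perpA e K f <-> genIdeal e (map (tau e) gensAnn) f.
Proof.
move=> K_gens f; split=> [f_perp|f_gen c /K_gens c_gen].
  have tauf_gen : genIdeal e gensAnn (tau e f).
    apply: ann_gensK => s lt_st; apply: (dotA_nondeg e_gt0) => m.
    rewrite (dotA_tauM e_gt0) (dotAC e_gt0); apply: f_perp; apply/K_gens.
    by rewrite mulrC; apply/genIdealMl/genIdeal_nth; rewrite size_gensK.
  apply: (genIdeal_congr (g := tau e (tau e f))).
    by rewrite -opprB; apply/inIN/inI_tauK.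
  apply: (genIdeal_tau tauf_gen) => j lt_j; rewrite -(nth_map 0 0 (tau e)) //.
  by apply: genIdeal_nth; rewrite size_map.
have tauf_gen : genIdeal e gensAnn (tau e f).
  apply: (genIdeal_tau f_gen) => j; rewrite size_map => lt_j; rewrite (nth_map 0) //.
  exact: (genIdeal_congr (inI_tauK e_gt0 _) (genIdeal_nth e lt_j)).
apply: (dotA_inI e_gt0); apply/(inI_tau_mul e_gt0).
apply: (inI_mul_genIdeal tauf_gen c_gen) => j s.
by rewrite size_gensAnn size_gensK; apply: inI_gensAnn_gensK.
Qed.

Lemma map_tau_gensAnn : map (tau e) gensAnn =
  tau e (G ord0) :: [seq a ^+ i *: tau e (G (inord (t + 1 - i))) | i <- iota 1 t.-1].
Proof.
by rewrite /= -map_comp; congr (_ :: _); apply: eq_map => i /=; rewrite linearZ.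
Qed.

End Dual.

Theorem mainTheorem9 (R : finComUnitRingType) (a : R) (t p : nat)
  (r : nat) (e : 'I_r -> nat)
  (hchain : chain_ring_max a)
  (ht : (0 < t)%N) (hat : a ^+ t = 0) (hat1 : a ^+ t.-1 != 0)
  (hp : prime p) (hpchar : (p%:R : R) \isn't a GRing.unit)
  (he : forall k, (0 < e k)%N /\ ~~ (p %| e k)%N)
  (K : {mpoly R[r]} -> Prop) (G : 'I_t.+1 -> {mpoly R[r]})
  (hint : forall f, (forall i, annA e (G i) f) -> inI e f)
  (hcomax : forall i j : 'I_t.+1, (i < j)%N -> annComax e (G i) (G j))
  (hK : forall f, K f <->
        genIdeal e [seq a ^+ i.-1 *: G (inord i) | i <- iota 1 t] f) :
  (forall f, perpA e K f <->
     genIdeal e (tau e (G ord0) ::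
        [seq a ^+ i *: tau e (G (inord (t + 1 - i))) | i <- iota 1 t.-1]) f)
  /\ (forall f, (forall i, annA e (tau e (G i)) f) -> inI e f)
  /\ (forall i j : 'I_t.+1, (i < j)%N -> annComax e (tau e (G i)) (tau e (G j))).
Proof.
have e_gt0 k : (0 < e k)%N by case: (he k).
have nonunit_dvd_a x : x \isn't a GRing.unit -> exists y, x = a * y := (hchain.2 x).1.
split; first by rewrite -map_tau_gensAnn; apply: perpA_gensK.
split=> [f tauG_f|i j lt_ij]; last exact/annComax_tau/hcomax.
by apply/(inI_tauE e_gt0)/hint => i; apply/(annA_tau e_gt0).
Qed.
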